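(* Let $\mathbb{F}$ be a field of characteristic different from $2$ and $V$ an $n$-dimensional $\mathbb{F}$-vector space. Let $H\leq V$ be a hyperplane defined by $l_H\in V^*$, and let $G_H\leq \mathrm{GL}(V)$ be a finite group of reflections about $H$ (i.e. a finite group fixing $H$ pointwise). Let $K_H$ be the kernel of $\det$ on $G_H$, let $e_H=|G_H:K_H|$, let $s_H\in G_H$ be a diagonalizable reflection of order $e_H$ (with $s_H=1$ if $e_H=1$), and let $b_H$ be the dimension of the span of the root vectors of the transvections in $K_H$. Let $v_1,\dots,v_n$ be a basis of $V$ such that: $v_1,\dots,v_{n-1}$ is a basis of $H$; $v_1,\dots,v_{b_H}$ are $\mathbb{F}$-independent root vectors (with respect to $l_H$) of transvections in $K_H$; and $v_n\notin H$ is an eigenvector of $s_H$ with $l_H(v_n)=1$. (Such a basis always exists.) Let $z_1,\dots,z_n$ be the dual basis of $V^*$. Then: (1) If $\mu$ is a $K_H$-invariant differential form, written $\mu=\sum_I u_I\,dz_I$ with $u_I\in\mathbb{F}[V]$, and $J$ is an index set with $J\cap\{1,\dots,b_H\}\neq\varnothing$ and $n\notin J$, then $l_H$ divides $u_J$. (2) If moreover $\mu$ is $G_H$-invariant, then $u_J$ is divisible by $l_H^{e_H}$.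
   Context: $\mathbb{F}[V]=S(V^* )$; $\Omega^k=\mathbb{F}[V]\otimes\Lambda^k(V^* )$, $\Omega=\bigoplus_k\Omega^k$, with a group $G\le\mathrm{GL}(V)$ acting on $V^*$ by $(gf)(v)=f(g^{-1}v)$ and diagonally on $\Omega$. For an ordered index set $I=\{i_1<\dots<i_m\}\subseteq\{1,\dots,n\}$, $dz_I=dz_{i_1}\wedge\cdots\wedge dz_{i_m}$; every form is uniquely $\sum_I u_I dz_I$. A reflection about $H$ is a finite-order element of $\mathrm{GL}(V)$ with fixed space $H$; it satisfies $s(v)=v+l_H(v)\alpha_s$ for a root vector $\alpha_s\in V$, and it is a transvection if $\alpha_s\in H$, diagonalizable otherwise. *)

From HB Require Import structures.
From mathcomp Require Import all_boot all_order all_algebra.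
From mathcomp Require Import mpoly.
Set Implicit Arguments. Unset Strict Implicit. Unset Printing Implicit Defensive.
Import Order.TTheory GRing.Theory Num.Theory.
Local Open Scope ring_scope.

Section Defs.
Variables (F : fieldType) (n : nat).

(* V = 'cV[F]_n (column vectors), GL(V) acts by g *m v.
   A linear form l in V^* is a row vector; its value is lval l v. *)
Definition lval (l : 'rV[F]_n) (v : 'cV[F]_n) : F := (l *m v) 0 0.

Definition root_vector (l : 'rV[F]_n) (g : 'M[F]_n) (a : 'cV[F]_n) : Prop :=
  forall v, g *m v = v + lval l v *: a.

(* g is a diagonalizable reflection about H = ker l (root vector not in H) *)
Definition diag_reflection (l : 'rV[F]_n) (g : 'M[F]_n) : Prop :=
  g != 1%:M /\ exists a, root_vector l g a /\ lval l a != 0.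

Definition transvection_root (l : 'rV[F]_n) (K : seq 'M[F]_n) (a : 'cV[F]_n) : Prop :=
  exists2 t, t \in K & [/\ t != 1%:M, root_vector l t a & lval l a = 0].

(* the span of the set of vectors R has dimension d: R contains d linearly
   independent vectors (rows of W, transposed) spanning every element of R. *)
Definition span_dimension (R : 'cV[F]_n -> Prop) (d : nat) : Prop :=
  exists W : 'M[F]_(d, n),
    [/\ row_free W, (forall i, R (row i W)^T) & (forall a, R a -> (a^T <= W)%MS)].

(* Polynomial functions F[V] are {mpoly F[n]}, where 'X_i is the coordinate
   function z_(i+1) of the chosen basis.  If B is the coordinate matrix of
   g^-1 in that basis, then (g f)(c) = f(B c), i.e. 'X_i |-> sum_j B i j 'X_j. *)
Definition lin_subst (B : 'M[F]_n) : n.-tuple {mpoly F[n]} :=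
  [tuple \sum_(j < n) B i j *: 'X_j | i < n].

Definition act_poly (B : 'M[F]_n) (p : {mpoly F[n]}) : {mpoly F[n]} :=
  comp_mpoly (lin_subst B) p.

(* the (I,J) wedge_minor of B, rows I and columns J in increasing order;
   0 if #|I| <> #|J|.  It is the coefficient of dz_J in
   (g dz_(i1)) /\ ... /\ (g dz_(im)) where g dz_i = sum_j B i j dz_j. *)
Definition wedge_minor (B : 'M[F]_n) (I J : {set 'I_n}) : F :=
  match #|I| =P #|J| with
  | ReflectT e =>
      \det (\matrix_(a < #|I|, b < #|I|)
              B (enum_val (A := mem I) a) (enum_val (A := mem J) (cast_ord e b)))
  | ReflectF _ => 0
  end.

(* A differential form mu = sum_I u_I dz_I is the function I |-> u_I. *)
Definition diff_form := {set 'I_n} -> {mpoly F[n]}.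

Definition act_form (B : 'M[F]_n) (mu : diff_form) : diff_form :=
  fun J => \sum_(I : {set 'I_n}) act_poly B (mu I) * (wedge_minor B I J)%:MP.

Definition coord_inv (P g : 'M[F]_n) : 'M[F]_n := invmx P *m invmx g *m P.

Definition invariant_form (P : 'M[F]_n) (S : seq 'M[F]_n) (mu : diff_form) : Prop :=
  forall g, g \in S -> forall J, act_form (coord_inv P g) mu J = mu J.

Definition lpoly (P : 'M[F]_n) (l : 'rV[F]_n) : {mpoly F[n]} :=
  \sum_(i < n) lval l (col i P) *: 'X_i.

Definition mdvd (p q : {mpoly F[n]}) : Prop := exists r, q = r * p.

End Defs.

From HB Require Import structures.
From mathcomp Require Import all_boot all_order all_algebra perm.
From mathcomp Require Import mpoly.
Set Implicit Arguments. Unset Strict Implicit. Unset Printing Implicit Defensive.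
Import Order.TTheory GRing.Theory Num.Theory.
Local Open Scope ring_scope.

(* In the adapted basis l_H is the coordinate z_n.  A transvection t in K_H with
   root vector v_j (j <= b_H) acts by dz_j |-> dz_j - dz_n and fixes the other
   dz_i, while it changes a polynomial only modulo z_n.  If j is in J and n is
   not, comparing the coefficients of dz_J' in mu and t mu, for J' = J - j + n,
   gives +-u_J = u_J' - t u_J', a multiple of z_n.  For G_H, the reflection s_H
   acts diagonally and scales z_n by c^-1 with c of order e_H, so every monomial
   of u_J has z_n-degree 0 or at least e_H, and degree 0 was just excluded. *)

Section Divisibility.
Variables (F : fieldType) (n : nat).
Implicit Types (p q d x y : {mpoly F[n]}).

Lemma mdvd0 d : mdvd d 0.
Proof. by exists 0; rewrite mul0r. Qed.

Lemma mdvdD d p q : mdvd d p -> mdvd d q -> mdvd d (p + q).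
Proof. by move=> [r ->] [s ->]; exists (r + s); rewrite mulrDl. Qed.

Lemma mdvdMl d p q : mdvd d p -> mdvd d (q * p).
Proof. by move=> [r ->]; exists (q * r); rewrite mulrA. Qed.

Lemma mdvdZ d c p : mdvd d p -> mdvd d (c *: p).
Proof. by move=> [r ->]; exists (c *: r); rewrite scalerAl. Qed.

Lemma mdvd_sum d (I : Type) (r : seq I) (P : pred I) (f : I -> {mpoly F[n]}) :
  (forall i, P i -> mdvd d (f i)) -> mdvd d (\sum_(i <- r | P i) f i).
Proof. by move=> h; elim/big_ind: _ => //; [apply: mdvd0 | apply: mdvdD]. Qed.

Lemma mdvd_mulB d x1 x2 y1 y2 : mdvd d (x1 - x2) -> mdvd d (y1 - y2) ->
  mdvd d (x1 * y1 - x2 * y2).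
Proof.
move=> dx dy; have -> : x1 * y1 - x2 * y2 = x1 * (y1 - y2) + (x1 - x2) * y2.
  by rewrite mulrBr mulrBl addrA subrK.
by apply: mdvdD; [|rewrite mulrC]; apply: mdvdMl.
Qed.

Lemma mdvd_prodB d (I : Type) (r : seq I) (P : pred I) (f g : I -> {mpoly F[n]}) :
  (forall i, P i -> mdvd d (f i - g i)) ->
  mdvd d (\prod_(i <- r | P i) f i - \prod_(i <- r | P i) g i).
Proof.
move=> h; elim/big_ind2: _ => //; last by move=> *; apply: mdvd_mulB.
by rewrite subrr; apply: mdvd0.
Qed.

Lemma mdvd_expB d x y k : mdvd d (x - y) -> mdvd d (x ^+ k - y ^+ k).
Proof.
move=> h; elim: k => [|k ih]; last by rewrite !exprS; apply: mdvd_mulB.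
by rewrite !expr0 subrr; apply: mdvd0.
Qed.

Lemma mdvd_comp_mpolyB d (lq : n.-tuple {mpoly F[n]}) p :
  (forall i, mdvd d (tnth lq i - 'X_i)) -> mdvd d (comp_mpoly lq p - p).
Proof.
move=> h; rewrite comp_mpolyEX [X in _ - X]mpolyE -sumrB.
apply: mdvd_sum => m _; rewrite -scalerBr comp_mpolyX [X in _ - X]mpolyXE_id.
by apply/mdvdZ/mdvd_prodB => i _; apply: mdvd_expB.
Qed.

Lemma mdvdX_msupp (i : 'I_n) p m : mdvd 'X_i p -> m \in msupp p -> (0 < m i)%N.
Proof.
move=> [r ->]; rewrite (perm_mem (msuppMX _ _)) => /mapP [m' _ ->].
by rewrite mnmDE mnm1E eqxx.
Qed.

Lemma msupp_mdvdXn (i : 'I_n) (k : nat) p :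
  (forall m, m \in msupp p -> (k <= m i)%N) -> mdvd ('X_i ^+ k) p.
Proof.
move=> h; exists (\sum_(m <- msupp p) p@_m *: 'X_[(m - U_(i) *+ k)%MM]).
rewrite {1}(mpolyE p) mulr_suml; apply: eq_big_seq => m hm.
rewrite -scalerAl mpolyXn -mpolyXD; congr (_ *: 'X_[_]).
apply/mnmP => j; rewrite mnmDE mnmBE mulmnE mnm1E.
case: eqP => [<-|_]; last by rewrite mul0n addn0 subn0.
by rewrite mul1n subnK // h.
Qed.

End Divisibility.

Section ActPoly.
Variables (F : fieldType) (n : nat).
Implicit Types (B : 'M[F]_n) (p : {mpoly F[n]}).

Lemma mdvd_act_polyB B (mo : 'I_n) p :
  (forall i k, k != mo -> B i k = (i == k)%:R) -> mdvd 'X_mo (act_poly B p - p).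
Proof.
move=> hB; apply: mdvd_comp_mpolyB => i; rewrite tnth_mktuple (bigD1 i) //= addrAC.
have dX : mdvd ('X_mo : {mpoly F[n]}) 'X_mo by exists 1; rewrite mul1r.
apply: mdvdD.
  have [->|nimo] := eqVneq i mo; first by rewrite -[X in _ - X]scale1r -scalerBl; apply: mdvdZ.
  by rewrite hB // eqxx scale1r subrr; apply: mdvd0.
apply: mdvd_sum => k nki; have [->|nkmo] := eqVneq k mo; first exact: mdvdZ.
by rewrite hB // eq_sym (negbTE nki) scale0r; apply: mdvd0.
Qed.

Lemma mcoeff_act_poly_diag (w : 'I_n -> F) p m :
  (act_poly (diag_mx (\row_k w k)) p)@_m = (\prod_i w i ^+ m i) * p@_m.
Proof.
have substE i : tnth (lin_subst (diag_mx (\row_k w k))) i = w i *: 'X_i.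
  rewrite tnth_mktuple (bigD1 i) //= big1 => [|k nki].
    by rewrite !mxE eqxx mulr1n addr0.
  by rewrite !mxE eq_sym (negbTE nki) mulr0n scale0r.
elim/mpolyind: p => [|c m' p _ _ ih]; first by rewrite /act_poly comp_mpoly0 !mcoeff0 mulr0.
rewrite /act_poly comp_mpolyD comp_mpolyZ comp_mpolyX !mcoeffD !mcoeffZ.
rewrite -/(act_poly _ p) ih mulrDr; congr (_ + _).
rewrite (eq_bigr (fun i => w i ^+ m' i *: 'X_i ^+ m' i)) => [|i _]; last first.
  by rewrite -exprZn -substE.
rewrite scaler_prod -mpolyXE_id mcoeffZ !mcoeffX.
by case: eqP => [->|_]; rewrite ?mulr0 // mulrCA.
Qed.

Lemma act_poly_diag_msupp (w : 'I_n -> F) p m :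
  act_poly (diag_mx (\row_k w k)) p = p -> m \in msupp p -> \prod_i w i ^+ m i = 1.
Proof.
move=> wp; rewrite mcoeff_msupp => pm_neq0; apply: (mulIf pm_neq0).
by rewrite -mcoeff_act_poly_diag wp mul1r.
Qed.

End ActPoly.

Section Determinant.
Variables (F : fieldType) (k : nat).
Implicit Type M : 'M[F]_k.

Lemma det_zero_row M a : (forall b, M a b = 0) -> \det M = 0.
Proof. by move=> h; rewrite (expand_det_row _ a) big1 // => b _; rewrite h mul0r. Qed.

Lemma det_proportional_rows M a1 a2 c : a1 != a2 ->
  (forall b, M a1 b = c * M a2 b) -> \det M = 0.
Proof.
move=> a12 h; pose A := \matrix_(a, b) if a == a1 then M a2 b else M a b.
have detA : \det A = 0.
  apply: (determinant_alternate a12) => b; rewrite !mxE eqxx.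
  by rewrite eq_sym (negbTE a12).
rewrite (@determinant_multilinear _ _ M A M a1 c 0) ?detA ?mulr0 ?mul0r ?addr0 //.
  by apply/rowP => b; rewrite !mxE eqxx h mul0r addr0.
apply/matrixP => a b; rewrite !mxE.
by rewrite eq_sym (negbTE (neq_lift a1 a)).
Qed.

Lemma det_signed_perm_neq0 M (pi : 'I_k -> 'I_k) (eps : 'I_k -> F) :
  injective pi -> (forall a, eps a != 0) ->
  (forall a b, M a b = eps a * (pi a == b)%:R) -> \det M != 0.
Proof.
move=> pi_inj eps_neq0 h.
have -> : M = diag_mx (\row_a eps a) *m perm_mx (perm pi_inj).
  by apply/matrixP => a b; rewrite mul_diag_mx !mxE h permE.
rewrite det_mulmx det_diag det_perm mulf_neq0 ?signr_eq0 //.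
by apply/prodf_neq0 => a _; rewrite mxE.
Qed.

End Determinant.

Section WedgeMinor.
Variables (F : fieldType) (n : nat).
Implicit Types (B : 'M[F]_n) (I J : {set 'I_n}).

Lemma wedge_minorE B I J (e : #|I| = #|J|) : wedge_minor B I J =
  \det (\matrix_(a < #|I|, b < #|I|)
          B (enum_val (A := mem I) a) (enum_val (A := mem J) (cast_ord e b))).
Proof. by rewrite /wedge_minor; case: eqP => // e'; rewrite (eq_irrelevance e' e). Qed.

Lemma wedge_minor_card B I J : #|I| != #|J| -> wedge_minor B I J = 0.
Proof. by rewrite /wedge_minor; case: eqP. Qed.

Lemma wedge_minor_id B I :
  (forall i k, i \in I -> k \in I -> B i k = (i == k)%:R) -> wedge_minor B I I = 1.
Proof.
move=> h; rewrite (wedge_minorE _ (erefl _)) -(det1 F #|I|); congr (\det _).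
apply/matrixP => a b; rewrite !mxE cast_ord_id h ?enum_valP //.
by rewrite (inj_eq enum_val_inj).
Qed.

Lemma wedge_minor_zero_row B I J i : i \in I -> (forall k, k \in J -> B i k = 0) ->
  wedge_minor B I J = 0.
Proof.
move=> iI h; have [e|ne] := eqVneq #|I| #|J|; last exact: wedge_minor_card.
rewrite (wedge_minorE _ e); apply: (@det_zero_row _ _ _ (enum_rank_in iI i)) => b.
by rewrite mxE enum_rankK_in // h // enum_valP.
Qed.

Lemma wedge_minor_proportional_rows B I J i1 i2 c :
  i1 \in I -> i2 \in I -> i1 != i2 ->
  (forall k, k \in J -> B i1 k = c * B i2 k) -> wedge_minor B I J = 0.
Proof.
move=> i1I i2I i12 h; have [e|ne] := eqVneq #|I| #|J|; last exact: wedge_minor_card.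
rewrite (wedge_minorE _ e).
apply: (@det_proportional_rows _ _ _ (enum_rank_in i1I i1) (enum_rank_in i1I i2) c).
  by rewrite (can_in_eq (enum_rankK_in i1I)).
by move=> b; rewrite !mxE !enum_rankK_in // h // enum_valP.
Qed.

Lemma wedge_minor_unit_cols B I J : (forall i k, k \in J -> B i k = (i == k)%:R) ->
  wedge_minor B I J = (I == J)%:R.
Proof.
move=> h; have [IJ|IJ] := eqVneq I J.
  by rewrite -IJ in h *; apply: wedge_minor_id => i k _; apply: h.
have [e|ne] := eqVneq #|I| #|J|; last by rewrite wedge_minor_card.
have /subsetPn [i iI iJ] : ~~ (I \subset J).
  by apply: contra IJ => sIJ; rewrite eqEcard sIJ e leqnn.
rewrite (wedge_minor_zero_row iI) // => k kJ; rewrite h //.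
by have /negbTE -> : i != k by apply: contraNneq iJ => ->.
Qed.

Lemma wedge_minor_signed_bij_neq0 B I J (phi : 'I_n -> 'I_n) (eps : 'I_n -> F) :
  #|I| = #|J| -> {in I &, injective phi} -> {in I, forall i, phi i \in J} ->
  {in I, forall i, eps i != 0} ->
  (forall i k, i \in I -> k \in J -> B i k = eps i * (phi i == k)%:R) ->
  wedge_minor B I J != 0.
Proof.
move=> e phi_inj phiJ eps_neq0 hB; rewrite (wedge_minorE _ e).
pose pi a := cast_ord (esym e) (enum_rank_in (phiJ _ (enum_valP a)) (phi (enum_val a))).
have piE a b : (pi a == b) = (phi (enum_val a) == enum_val (cast_ord e b)).
  apply/eqP/eqP => [<-|E]; first by rewrite cast_ordKV enum_rankK_in ?phiJ ?enum_valP.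
  apply: (@cast_ord_inj _ _ e); apply: enum_val_inj.
  by rewrite /pi cast_ordKV enum_rankK_in ?phiJ ?enum_valP.
apply: (det_signed_perm_neq0 (pi := pi) (eps := fun a => eps (enum_val a))).
- move=> a1 a2 /eqP; rewrite piE cast_ordKV enum_rankK_in ?phiJ ?enum_valP // => /eqP.
  by move/phi_inj => /(_ (enum_valP a1) (enum_valP a2)) /enum_val_inj.
- by move=> a; apply: eps_neq0; apply: enum_valP.
by move=> a b; rewrite mxE hB ?enum_valP // piE.
Qed.

Lemma act_form_unit_cols B (mu : diff_form F n) J :
  (forall i k, k \in J -> B i k = (i == k)%:R) -> act_form B mu J = act_poly B (mu J).
Proof.
move=> h; rewrite /act_form (bigD1 J) //= big1 => [|I IJ].
  by rewrite wedge_minor_unit_cols // eqxx mpolyC1 mulr1 addr0.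
by rewrite wedge_minor_unit_cols // (negbTE IJ) mpolyC0 mulr0.
Qed.

End WedgeMinor.

Section Transvection.
Variables (F : fieldType) (n : nat) (j mo : 'I_n) (J : {set 'I_n}).
Hypotheses (jJ : j \in J) (moJ : mo \notin J).

Local Notation B := (1%:M - delta_mx j mo : 'M[F]_n).
Local Notation J' := (mo |: (J :\ j)).

Let j_neq_mo : j != mo. Proof. by apply: contraNneq moJ => <-. Qed.

Let transvection_col i k : k != mo -> B i k = (i == k)%:R.
Proof. by move=> kmo; rewrite !mxE (negbTE kmo) andbF subr0. Qed.

Let transvection_col_mo i : B i mo = (i == mo)%:R - (i == j)%:R.
Proof. by rewrite !mxE eqxx andbT. Qed.

Let in_swap k : (k \in J') = (k == mo) || (k != j) && (k \in J).
Proof. by rewrite !inE. Qed.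

Let mo_swap : mo \in J'. Proof. by rewrite in_swap eqxx. Qed.

Let j_swap : j \notin J'. Proof. by rewrite in_swap (negbTE j_neq_mo) eqxx. Qed.

Let card_swap : #|J| = #|J'|.
Proof. by rewrite cardsU1 (cardsD1 j J) jJ in_setD1 (negbTE moJ) andbF. Qed.

Let minor_swap_swap : wedge_minor B J' J' = 1.
Proof.
apply: wedge_minor_id => i k iJ' _; have [->|kmo] := eqVneq k mo; last exact: transvection_col.
have /negbTE ij : i != j by apply: contraNneq j_swap => ij; rewrite -[X in X \in _]ij.
by rewrite transvection_col_mo ij subr0.
Qed.

(* Either some row of [I] outside [J' :|: [set j]] vanishes on [J'], or [I]
   contains both [j] and [mo], whose rows are opposite on [J']. *)
Let minor_other_swap I : I != J' -> I != J -> wedge_minor B I J' = 0.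
Proof.
move=> IJ' IJ; have [e|ne] := eqVneq #|I| #|J'|; last exact: wedge_minor_card.
have [/existsP [i /and3P [iI iJ' ij]]|sub] :=
  boolP [exists i, [&& i \in I, i \notin J' & i != j]].
  apply: (wedge_minor_zero_row iI) => k kJ'; have [->|kmo] := eqVneq k mo.
    have /negbTE imo : i != mo by apply: contraNneq iJ' => ->.
    by rewrite transvection_col_mo imo (negbTE ij) subrr.
  have /negbTE ik : i != k by apply: contraNneq iJ' => ->.
  by rewrite transvection_col // ik.
have subI i : i \in I -> (i \in J') || (i == j).
  move=> iI; apply: contraR sub; rewrite negb_or => /andP [iJ' ij].
  by apply/existsP; exists i; rewrite iI iJ' ij.
have jI : j \in I.
  apply: contraR IJ' => jI; rewrite eqEcard e leqnn andbT; apply/subsetP => i iI.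
  by have := subI i iI; case: eqP iI => [->|_]; rewrite ?(negbTE jI) ?orbF.
have moI : mo \in I.
  apply: contraR IJ => moI; rewrite eqEcard e -card_swap leqnn andbT.
  apply/subsetP => i iI; have := subI i iI; case: eqP => [->//|_].
  by rewrite orbF in_swap => /orP [/eqP iE|/andP []//]; move: iI; rewrite iE (negbTE moI).
apply: (wedge_minor_proportional_rows (c := -1) jI moI j_neq_mo) => k kJ'.
have [->|kmo] := eqVneq k mo.
  rewrite !transvection_col_mo !eqxx (negbTE j_neq_mo) eq_sym (negbTE j_neq_mo).
  by rewrite subr0 sub0r mulN1r.
have /negbTE mok : mo != k by rewrite eq_sym.
have /negbTE jk : j != k by apply: contraNneq j_swap => jk; rewrite [X in X \in _]jk.
by rewrite !transvection_col // mok jk mulr0.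
Qed.

Let minor_swap_neq0 : wedge_minor B J J' != 0.
Proof.
pose phi i := if i == j then mo else i.
apply: (wedge_minor_signed_bij_neq0 (phi := phi) (eps := fun i => if i == j then -1 else 1)).
- exact: card_swap.
- move=> i1 i2 i1J i2J; rewrite /phi.
  have i1mo : i1 != mo by apply: contraNneq moJ => <-.
  have i2mo : i2 != mo by apply: contraNneq moJ => <-.
  case: (eqVneq i1 j) => [->|_]; case: (eqVneq i2 j) => [->|_] //= E.
  + by move: i2mo; rewrite -E eqxx.
  + by move: i1mo; rewrite E eqxx.
- move=> i iJ; rewrite /phi; case: eqP => [_|/eqP ij]; first exact: mo_swap.
  by rewrite in_swap ij iJ orbT.
- by move=> i _; case: ifP; rewrite ?oppr_eq0 oner_neq0.
move=> i k iJ kJ'; have imo : i != mo by apply: contraNneq moJ => <-.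
rewrite /phi; have [->|nij] := eqVneq i j; have [->|kmo] := eqVneq k mo.
- by rewrite transvection_col_mo (negbTE j_neq_mo) eqxx sub0r mulr1.
- have /negbTE jk : j != k by apply: contraNneq j_swap => jk; rewrite [X in X \in _]jk.
  by rewrite transvection_col // jk mulr0.
- by rewrite transvection_col_mo (negbTE imo) (negbTE nij) subrr mulr0.
- by rewrite transvection_col // mul1r.
Qed.

Let act_form_swap (mu : diff_form F n) :
  act_form B mu J' = act_poly B (mu J') + wedge_minor B J J' *: act_poly B (mu J).
Proof.
have JJ' : J != J' by apply: contraNneq moJ => ->.
rewrite /act_form (bigD1 J') //= (bigD1 J) //= big1 ?addr0 => [|I /andP [IJ' IJ]].
  by rewrite minor_swap_swap mpolyC1 mulr1 mulrC mul_mpolyC.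
by rewrite minor_other_swap // mpolyC0 mulr0.
Qed.

Lemma transvection_invariant_mdvdX (mu : diff_form F n) :
  act_form B mu J = mu J -> act_form B mu J' = mu J' -> mdvd 'X_mo (mu J).
Proof.
move=> muJ muJ'; rewrite act_form_unit_cols in muJ; last first.
  by move=> i k kJ; apply: transvection_col; apply: contraNneq moJ => <-.
rewrite act_form_swap muJ in muJ'.
have -> : mu J = - (wedge_minor B J J')^-1 *: (act_poly B (mu J') - mu J').
  rewrite -{2}muJ' opprD addrA subrr add0r scalerN scaleNr opprK scalerA.
  by rewrite (mulVf minor_swap_neq0) scale1r.
apply/mdvdZ/mdvd_act_polyB => i k; exact: transvection_col.
Qed.

End Transvection.

Section Coordinates.
Variables (F : fieldType) (n : nat).
Implicit Types (P g s X : 'M[F]_n).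

Lemma col_mulmx m p q (A : 'M[F]_(m, p)) (B : 'M[F]_(p, q)) k :
  col k (A *m B) = A *m col k B.
Proof. by rewrite !colE mulmxA. Qed.

Lemma eq_col_mx m p (A B : 'M[F]_(m, p)) : (forall k, col k A = col k B) -> A = B.
Proof. by move=> h; apply/matrixP => i k; move/colP: (h k) => /(_ i); rewrite !mxE. Qed.

Lemma coord_invE P g X : P \in unitmx -> g \in unitmx ->
  g *m (P *m X) = P -> coord_inv P g = X.
Proof.
move=> hP hg h; rewrite /coord_inv -mulmxA.
have -> : invmx g *m P = P *m X by rewrite -{1}h mulKmx.
by rewrite mulKmx.
Qed.

Lemma root_vector_mx (l : 'rV[F]_n) g a : root_vector l g a -> g = 1%:M + a *m l.
Proof.
move=> h; apply: eq_col_mx => k; rewrite [LHS]colE [RHS]colE h mulmxDl mul1mx -mulmxA.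
by rewrite [l *m _]mx11_scalar mul_mx_scalar.
Qed.

Lemma eigen_expmx_eq1 s P (d : 'I_n -> F) k : P \in unitmx ->
  (forall i, s *m col i P = d i *: col i P) -> (forall i, d i ^+ k = 1) -> s ^+ k = 1%:M.
Proof.
move=> hP hd dk; suff sP : s ^+ k *m P = P by rewrite -(mulmxK hP (s ^+ k)) sP mulmxV.
apply: eq_col_mx => i; rewrite col_mulmx -[RHS]scale1r -(dk i).
elim: k {dk} => [|k ih]; first by rewrite expr0 mul1mx scale1r.
by rewrite exprSr -mulmxE -mulmxA hd -scalemxAr ih scalerA -exprS.
Qed.

Lemma coord_inv_eigen P s (d : 'I_n -> F) : P \in unitmx -> s \in unitmx ->
  (forall k, s *m col k P = d k *: col k P) -> (forall k, d k != 0) ->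
  coord_inv P s = diag_mx (\row_k (d k)^-1).
Proof.
move=> hP hs hd d_neq0; apply: coord_invE => //; apply: eq_col_mx => k.
rewrite col_mulmx; have -> : col k (P *m diag_mx (\row_k (d k)^-1)) = (d k)^-1 *: col k P.
  by apply/colP => i; rewrite mul_mx_diag !mxE mulrC.
by rewrite -scalemxAr hd scalerA mulVf ?scale1r.
Qed.

End Coordinates.

Section AdaptedBasis.
Variables (F : fieldType) (n : nat) (P : 'M[F]_n) (l : 'rV[F]_n) (mo : 'I_n).
Hypotheses (hP : P \in unitmx) (lP : forall k, lval l (col k P) = (k == mo)%:R).

Lemma lpoly_adapted : lpoly P l = 'X_mo.
Proof.
rewrite /lpoly (bigD1 mo) //= lP eqxx scale1r big1 ?addr0 // => k kmo.
by rewrite lP (negbTE kmo) scale0r.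
Qed.

Lemma coord_inv_transvection t j : t \in unitmx ->
  root_vector l t (col j P) -> j != mo -> coord_inv P t = 1%:M - delta_mx j mo.
Proof.
move=> ht tj jmo; apply: coord_invE => //.
have lPE : l *m P = delta_mx 0 mo.
  by apply/matrixP => i k; rewrite ord1 [RHS]mxE eqxx /= -lP /lval -col_mulmx [RHS]mxE.
have la : l *m col j P = 0.
  by apply/matrixP => i k; rewrite !ord1 [RHS]mxE; have := lP j; rewrite (negbTE jmo).
have Pdelta : P *m delta_mx j mo = col j P *m delta_mx 0 mo.
  by rewrite colE -mulmxA mul_delta_mx.
rewrite (root_vector_mx tj) mulmxBr mulmx1 Pdelta mulmxDl mul1mx mulmxBr -!mulmxA lPE.
by rewrite (mulmxA l) la mul0mx mulmx0 subr0 subrK.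
Qed.

Lemma transvection_root_invariant_mdvdX t j (mu : diff_form F n) (J : {set 'I_n}) :
  t \in unitmx -> root_vector l t (col j P) -> j \in J -> mo \notin J ->
  (forall J', act_form (coord_inv P t) mu J' = mu J') -> mdvd 'X_mo (mu J).
Proof.
move=> ht tj jJ moJ tmu; have jmo : j != mo by apply: contraNneq moJ => <-.
by apply: (transvection_invariant_mdvdX jJ moJ); rewrite -(coord_inv_transvection ht tj jmo).
Qed.

End AdaptedBasis.

Section EigenBasis.
Variables (F : fieldType) (n : nat) (P s : 'M[F]_n) (mo : 'I_n) (c : F) (e : nat).
Hypotheses (hP : P \in unitmx) (hs : s \in unitmx).
Hypothesis s_eigen : forall k, s *m col k P = (if k == mo then c else 1) *: col k P.
Hypothesis s_order : forall k, (0 < k < e)%N -> s ^+ k != 1%:M.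

Let c_neq0 : c != 0.
Proof.
apply: contraTneq hP => c0; rewrite unitmxE unitfE negbK -det_tr.
apply/eqP/(@det_zero_row _ _ _ mo) => i; rewrite mxE.
have := s_eigen mo; rewrite eqxx c0 scale0r => /(congr1 (mulmx (invmx s))).
by rewrite mulKmx // mulmx0 => /colP /(_ i); rewrite !mxE.
Qed.

Lemma eigen_invariant_mdvdXn (mu : diff_form F n) (J : {set 'I_n}) : mo \notin J ->
  act_form (coord_inv P s) mu J = mu J -> mdvd 'X_mo (mu J) -> mdvd ('X_mo ^+ e) (mu J).
Proof.
move=> moJ smu dX; rewrite (coord_inv_eigen hP hs s_eigen) in smu; last first.
  by move=> k; case: ifP => _; [exact: c_neq0 | exact: oner_neq0].
rewrite act_form_unit_cols in smu; last first.
  move=> i k kJ; rewrite !mxE; have [->|_] := eqVneq i k; last by rewrite mulr0n.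
  have /negbTE kmo : k != mo by apply: contraNneq moJ => <-.
  by rewrite kmo invr1.
apply: msupp_mdvdXn => m mJ; rewrite leqNgt; apply/negP => m_lt_e.
have := s_order (k := m mo); rewrite (mdvdX_msupp dX mJ) m_lt_e => /(_ isT) /eqP; apply.
apply: (eigen_expmx_eq1 hP s_eigen) => k; case: eqP => [_|_]; last exact: expr1n.
have := act_poly_diag_msupp smu mJ; rewrite (bigD1 mo) //= big1 ?mulr1 => [|i imo].
  by rewrite eqxx exprVn => /eqP; rewrite invr_eq1 => /eqP.
by rewrite (negbTE imo) invr1 expr1n.
Qed.

End EigenBasis.

Theorem lemma3p3 (F : fieldType) (n : nat)
  (hchar : (2 \notin [pchar F])%N)
  (* hyperplane H = ker l *)
  (l : 'rV[F]_n) (hl : l != 0)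
  (* finite group G_H <= GL(V) fixing H pointwise *)
  (G : seq 'M[F]_n) (hGuniq : uniq G) (hG1 : 1%:M \in G)
  (hGunit : forall g, g \in G -> g \in unitmx)
  (hGmul : forall g h, g \in G -> h \in G -> g *m h \in G)
  (hGinv : forall g, g \in G -> invmx g \in G)
  (hGfix : forall g, g \in G -> forall v, lval l v = 0 -> g *m v = v)
  (* K_H = kernel of det on G_H, e_H = |G_H : K_H| *)
  (K : seq 'M[F]_n) (hK : K = [seq g <- G | \det g == 1])
  (e : nat) (he : e = (size G %/ size K)%N)
  (* s_H: element of G_H of order e_H, a diagonalizable reflection if e_H > 1 *)
  (s : 'M[F]_n) (hs : s \in G) (hse : s ^+ e = 1%:M)
  (hsord : forall k, (0 < k < e)%N -> s ^+ k != 1%:M)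
  (hsdiag : (1 < e)%N -> diag_reflection l s)
  (* b_H = dim of span of root vectors of transvections in K_H *)
  (b : nat) (hb : span_dimension (transvection_root l K) b)
  (* basis v_1..v_n = columns of P *)
  (P : 'M[F]_n) (hP : P \in unitmx)
  (hPH : forall i : 'I_n, (i < n.-1)%N -> lval l (col i P) = 0)
  (hPb : forall i : 'I_n, (i < b)%N -> transvection_root l K (col i P))
  (hPn : forall i : 'I_n, i = n.-1 :> nat ->
           lval l (col i P) = 1 /\ exists c : F, s *m col i P = c *: col i P) :
  (forall mu : diff_form F n, invariant_form P K mu ->
     forall J : {set 'I_n},
       (exists2 j, j \in J & (j < b)%N) -> (forall j, j \in J -> j != n.-1 :> nat) ->
       mdvd (lpoly P l) (mu J))
  /\
  (forall mu : diff_form F n, invariant_form P G mu ->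
     forall J : {set 'I_n},
       (exists2 j, j \in J & (j < b)%N) -> (forall j, j \in J -> j != n.-1 :> nat) ->
       mdvd (lpoly P l ^+ e) (mu J)).
Proof.
have n_gt0 : (0 < n)%N.
  case: (posnP n) => // n0; case/eqP: hl; apply/matrixP => i k.
  by have := ltn_ord k; rewrite [X in (_ < X)%N]n0.
have mo_lt : (n.-1 < n)%N by rewrite ltn_predL.
pose mo := Ordinal mo_lt.
have [l_mo [c s_mo]] := hPn mo erefl.
have lP k : lval l (col k P) = (k == mo)%:R.
  have [->|kmo] := eqVneq k mo; first exact: l_mo.
  have k_neq : val k != n.-1 := kmo.
  by apply: hPH; rewrite ltn_neqAle k_neq -ltnS prednK // ltn_ord.
have mo_notin (J : {set 'I_n}) : (forall j, j \in J -> j != n.-1 :> nat) -> mo \notin J.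
  by move=> hJ; apply/negP => /hJ; rewrite eqxx.
have KG : {subset K <= G} by move=> g; rewrite hK mem_filter => /andP [].
have K_mdvdX (mu : diff_form F n) (J : {set 'I_n}) : invariant_form P K mu ->
    (exists2 j, j \in J & (j < b)%N) -> mo \notin J -> mdvd 'X_mo (mu J).
  move=> Kmu [j jJ jb] moJ; have [t tK [_ tj _]] := hPb j jb.
  exact: (transvection_root_invariant_mdvdX hP lP (hGunit t (KG t tK)) tj jJ moJ (Kmu t tK)).
rewrite (lpoly_adapted lP); split=> mu Gmu J Jb /mo_notin moJ; first exact: K_mdvdX.
apply: (eigen_invariant_mdvdXn (c := c) hP (hGunit s hs) _ hsord moJ (Gmu s hs J)).
  move=> k; case: eqP => [->//|/eqP kmo].
  by rewrite scale1r hGfix // lP (negbTE kmo).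
by apply: K_mdvdX => // g /KG; apply: Gmu.
Qed.
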